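(* Let $G$ be a disjoint union of finitely many star graphs $S_{n_1},\dots,S_{n_r}$ ($r\ge 1$, each $n_i\ge 1$). Under optimal play, the result of the Sign Game on $G$ is: (1) a draw if every $n_i$ is even; (2) a win for Player 2 if at least one $n_i$ is odd and the number of indices $i$ with $n_i$ even is even; (3) a win for Player 1 if at least one $n_i$ is odd and the number of indices $i$ with $n_i$ even is odd.
   Context: The Sign Game on a finite simple undirected graph $G$: two players, Player P and Player N, alternate turns; the player who moves first is called Player 1 and the other Player 2 (either of P, N may be Player 1). On a turn, a player chooses a vertex of $G$ not yet assigned a value and assigns it $+1$ or $-1$. The game ends when every vertex has been assigned. The score of an edge $uv$ is the product of the values of $u$ and $v$, and the score $s(G)$ of the game is the sum of the scores of all edges. Player P wins if $s(G)>0$, Player N wins if $s(G)<0$, and the game is a draw if $s(G)=0$. ''Under optimal play'' means both players play optimally, each with primary goal of winning and secondary goal of at least drawing; the result is the outcome of this finite perfect-information game under such play. The star graph $S_n$ has $n+1$ vertices: one central vertex adjacent to each of $n$ leaves, with no other edges. *)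

From mathcomp Require Import all_boot all_order all_algebra.
Set Implicit Arguments. Unset Strict Implicit. Unset Printing Implicit Defensive.
Import Order.TTheory GRing.Theory Num.Theory.
Local Open Scope ring_scope.

(* The Sign Game on a finite simple graph given by an (irreflexive,
   symmetric) adjacency relation e on a finite vertex type T. *)
Section SignGame.
Variables (T : finType) (e : rel T).

(* A (partial) assignment: None = not yet assigned, Some true = +1,
   Some false = -1. *)
Definition assignment := {ffun T -> option bool}.

Definition spin (a : assignment) (x : T) : int :=
  match a x with Some true => 1 | Some false => -1 | None => 0 end.

Definition edges : {set {set T}} :=
  [set E : {set T} | [exists x, exists y, e x y && (E == [set x; y])]].

Definition score (a : assignment) : int :=
  \sum_(E in edges) \prod_(x in E) spin a x.

Definition unassigned (a : assignment) : seq T :=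
  [seq x <- enum T | a x == None].

Definition moves (a : assignment) : seq (T * bool) :=
  [seq (x, b) | x <- unassigned a, b <- [:: true; false]].

Definition assign (a : assignment) (m : T * bool) : assignment :=
  [ffun y => if y == m.1 then Some m.2 else a y].

(* Minimax value of the outcome sgz(s(G)) in {-1,0,1}: +1 = P wins,
   0 = draw, -1 = N wins.  P (to move when pturn = true) maximises,
   N minimises.  k is fuel (number of remaining moves). *)
Fixpoint value (k : nat) (pturn : bool) (a : assignment) : int :=
  match k with
  | 0%N => sgz (score a)
  | k'.+1 =>
      if nilp (moves a) then sgz (score a)
      else if pturn then
        foldr Num.max (-1) [seq value k' (~~ pturn) (assign a m) | m <- moves a]
      else
        foldr Num.min 1 [seq value k' (~~ pturn) (assign a m) | m <- moves a]
  end.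

(* Result of the game from the empty position; p_first = Player P moves
   first (i.e. P is Player 1). *)
Definition game_value (p_first : bool) : int :=
  value #|T| p_first [ffun _ => None].

(* Outcomes in terms of Player 1 / Player 2, for either assignment of
   the roles P, N to Player 1. *)
Definition sign_game_draw : Prop := forall p_first, game_value p_first = 0.
Definition player1_wins : Prop :=
  forall p_first, game_value p_first = (if p_first then 1 else -1).
Definition player2_wins : Prop :=
  forall p_first, game_value p_first = (if p_first then -1 else 1).

End SignGame.

(* Disjoint union of stars S_{n_1}, ..., S_{n_r}, ns = [:: n_1; ...; n_r].
   Vertex (i, j): star i, j = 0 its centre, j = 1..n_i its leaves. *)
Definition stars_vertex (ns : seq nat) : finType :=
  {i : 'I_(size ns) & 'I_(nth 0%N ns i).+1}.

Definition stars_adj (ns : seq nat) : rel (stars_vertex ns) :=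
  fun u v => (tag u == tag v) &&
             ((val (tagged u) == 0%N) != (val (tagged v) == 0%N)).

(* A star whose centre has value c and whose leaves carry p values +1 and
   m values -1 contributes c (p - m) to the score.  The player [sig] who is to win keeps
   the invariant: a star with free centre has p = m, a star with assigned centre
   contributes (seen by [sig]) exactly 1 if its number of leaves is odd and 0 if it is
   even, and the number of even stars with free centre is even.  Every opponent move is
   answered in the same star, except a move on the centre of an even star, which is
   answered by taking the centre of another even star.  At the end some star is odd, so
   the score has the sign of [sig].  Player 2 starts in the invariant when the number of
   even stars is even; otherwise Player 1 first takes the centre of an even star.  When
   all stars are even, either player keeps every contribution nonnegative by answering
   leaves with opposite leaves, which forces a draw. *)

From mathcomp Require Import all_boot all_order all_algebra.
From mathcomp Require Import zify.
Set Implicit Arguments. Unset Strict Implicit. Unset Printing Implicit Defensive.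
Import Order.TTheory GRing.Theory Num.Theory.
Local Open Scope ring_scope.

(** * Minimax values and strategies *)

Section GameValue.
Variables (T : finType) (e : rel T).
Local Notation position := (assignment T).

Definition free_vertices (a : position) := #|[pred x | a x == None]|.

Lemma mem_moves (a : position) v b : ((v, b) \in moves a) = (a v == None).
Proof.
rewrite /moves; apply/allpairsPdep/idP.
- by case=> x [y [+ _ [-> _]]]; rewrite mem_filter => /andP[].
- by move=> h; exists v, b; rewrite mem_filter h mem_enum; case: b.
Qed.

Lemma nil_moves_assigned (a : position) v : nilp (moves a) -> a v != None.
Proof.
move=> /nilP nil_a; apply/negP => /eqP a_v.
by have := mem_moves a v true; rewrite nil_a a_v eqxx.
Qed.

Lemma free_vertices_assign (a : position) m :
  m \in moves a -> free_vertices a = (free_vertices (assign a m)).+1.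
Proof.
case: m => v b; rewrite mem_moves => a_v.
rewrite /free_vertices (cardD1 v) inE a_v add1n; congr _.+1; apply: eq_card => x.
by rewrite !inE ffunE /=; case: (x =P v) => [->|].
Qed.

Lemma free_vertices0_moves (a : position) : free_vertices a = 0%N -> nilp (moves a).
Proof.
move=> free0; case E: (moves a) => [//|m s].
have m_a : m \in moves a by rewrite E mem_head.
by move: (free_vertices_assign m_a); rewrite free0.
Qed.

Lemma free_vertices_unassigned : free_vertices [ffun=> None] = #|T|.
Proof. by apply: eq_card => x; rewrite !inE ffunE. Qed.

Lemma le_foldr_max (s : seq int) d x : x \in s -> x <= foldr Num.max d s.
Proof.
by elim: s => //= y s IH; rewrite inE le_max => /orP[/eqP->|/IH->]; rewrite ?lexx ?orbT.
Qed.

Lemma foldr_max_le (s : seq int) d t :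
  d <= t -> all (<= t) s -> foldr Num.max d s <= t.
Proof. by move=> dt; elim: s => //= y s IH /andP[yt st]; rewrite ge_max yt IH. Qed.

Lemma foldr_min_le (s : seq int) d x : x \in s -> foldr Num.min d s <= x.
Proof.
by elim: s => //= y s IH; rewrite inE ge_min => /orP[/eqP->|/IH->]; rewrite ?lexx ?orbT.
Qed.

Lemma le_foldr_min (s : seq int) d t :
  t <= d -> all (>= t) s -> t <= foldr Num.min d s.
Proof. by move=> td; elim: s => //= y s IH /andP[ty st]; rewrite le_min ty IH. Qed.

Lemma value_range k p (a : position) : -1 <= value e k p a <= 1.
Proof.
elim: k p a => [|k IH] p a /=; first by case: sgzP.
case: ifP => [_|]; first by case: sgzP.
case E: (moves a) => [//|m s] _; rewrite -E.
have m_a : m \in moves a by rewrite E mem_head.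
have child_range m' := IH (~~ p) (assign a m').
case: p child_range => child_range; apply/andP; split.
- by apply: le_trans (le_foldr_max _ (map_f _ m_a)); case/andP: (child_range m).
- by apply: foldr_max_le => //; apply/allP => _ /mapP[m' _ ->]; case/andP: (child_range m').
- by apply: le_foldr_min => //; apply/allP => _ /mapP[m' _ ->]; case/andP: (child_range m').
- by apply: le_trans (foldr_min_le _ (map_f _ m_a)) _; case/andP: (child_range m).
Qed.

(* [sgn sig * v] is the outcome [v] seen by P if [sig], by N otherwise. *)
Definition sgn (sig : bool) : int := if sig then 1 else -1.

Lemma sgn_sgz sig (x : int) : sgn sig * sgz x = sgz (sgn sig * x).
Proof. by rewrite sgzM; case: sig. Qed.

Lemma value_turn_ge k sig (a : position) m t :
  m \in moves a -> t <= sgn sig * value e k (~~ sig) (assign a m) ->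
  t <= sgn sig * value e k.+1 sig a.
Proof.
move=> m_a; have /= -> : nilp (moves a) = false by case: (moves a) m_a.
case: sig => /=; rewrite ?mul1r ?mulN1r => child.
- exact: le_trans child (le_foldr_max _ (map_f _ m_a)).
- by rewrite lerNr (le_trans (foldr_min_le _ (map_f _ m_a))) // -lerNr.
Qed.

Lemma value_other_turn_ge k sig (a : position) t :
  t <= 1 -> ~~ nilp (moves a) ->
  (forall m, m \in moves a -> t <= sgn sig * value e k sig (assign a m)) ->
  t <= sgn sig * value e k.+1 (~~ sig) a.
Proof.
move=> t1 /negbTE /= -> child; rewrite negbK.
case: sig child => /= child; rewrite ?mul1r ?mulN1r.
- apply: le_foldr_min => //; apply/allP => _ /mapP[m m_a ->].
  by have := child m m_a; rewrite mul1r.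
- rewrite lerNr; apply: foldr_max_le; first by rewrite lerNr opprK.
  by apply/allP => _ /mapP[m m_a ->] /=; rewrite lerNr -mulN1r child.
Qed.

Section Strategy.
Variables (sig : bool) (t : int) (Inv : position -> Prop).

Definition can_maintain (a : position) :=
  (Inv a /\ nilp (moves a)) \/ exists2 m, m \in moves a & Inv (assign a m).

Hypothesis t_le1 : t <= 1.
Hypothesis Inv_final : forall a, Inv a -> nilp (moves a) -> t <= sgn sig * sgz (score e a).
Hypothesis Inv_reply : forall a m, Inv a -> m \in moves a -> can_maintain (assign a m).

Lemma strategy_value_ge k (a : position) : free_vertices a = k ->
  (Inv a -> t <= sgn sig * value e k (~~ sig) a) /\
  (can_maintain a -> t <= sgn sig * value e k sig a).
Proof.
elim: k a => [|k IH] a free_a.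
  have /= nil_a := free_vertices0_moves free_a.
  split=> [Inv_a|[[Inv_a _]|[m m_a _]]]; try exact: Inv_final.
  by rewrite (nilP nil_a) in m_a.
have free_child m : m \in moves a -> free_vertices (assign a m) = k.
  by move/free_vertices_assign; rewrite free_a => -[].
split=> [Inv_a | [[Inv_a nil_a]|[m m_a Inv_am]]].
- case: (boolP (nilp (moves a))) => [nil_a|cont_a].
    by rewrite /= nil_a; apply: Inv_final.
  apply: (value_other_turn_ge t_le1 cont_a) => m m_a.
  by have [_ ->] := IH _ (free_child m m_a); last exact: Inv_reply.
- by rewrite /= nil_a; apply: Inv_final.
- apply: (value_turn_ge m_a).
  by have [-> //] := IH _ (free_child m m_a).
Qed.

Lemma game_value_second_ge : Inv [ffun=> None] -> t <= sgn sig * game_value e (~~ sig).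
Proof. by have [+ _] := strategy_value_ge free_vertices_unassigned. Qed.

Lemma game_value_first_ge : can_maintain [ffun=> None] -> t <= sgn sig * game_value e sig.
Proof. by have [_ +] := strategy_value_ge free_vertices_unassigned. Qed.

End Strategy.

Lemma game_value_winner sig p : 1 <= sgn sig * game_value e p -> game_value e p = sgn sig.
Proof.
by have := value_range #|T| p [ffun=> None]; rewrite /game_value; case: sig => /=; lia.
Qed.

End GameValue.

(** * A single star *)

Record star_state := StarState {
  centre : option bool; nplus : nat; nminus : nat; nfree : nat }.

(* [star_move true b] labels a free leaf with [b], [star_move false b] the centre. *)
Definition star_move (leaf b : bool) (s : star_state) : star_state :=
  let: StarState c p m f := s in
  if leaf then StarState c (p + b) (m + ~~ b) f.-1 else StarState (Some b) p m f.

Definition legal_move (leaf : bool) (s : star_state) : bool :=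
  if leaf then (0 < nfree s)%N else centre s == None.

Definition margin (sig : bool) (s : star_state) : int :=
  if centre s is Some c then sgn (sig == c) * ((nplus s)%:Z - (nminus s)%:Z) else 0.

Definition win_star (sig : bool) (n : nat) (s : star_state) : Prop :=
  if centre s is Some _ then margin sig s = odd n else nplus s = nminus s.

Definition draw_star (sig : bool) (s : star_state) : Prop :=
  if centre s is Some _ then 0 <= margin sig s else nplus s = nminus s.

Lemma win_star_reply sig n s leaf b :
  (nplus s + nminus s + nfree s)%N = n -> win_star sig n s -> legal_move leaf s ->
  leaf || odd n ->
  exists leaf' b', let s' := star_move leaf' b' (star_move leaf b s) in
    [/\ legal_move leaf' (star_move leaf b s), win_star sig n s'
      & odd n \/ centre s' = centre s].
Proof.
(* A centre move on an odd star is answered by a leaf of the sign favourable to [sig], a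
   leaf move on an odd star with free centre by that centre; any other leaf move by the
   opposite leaf, which is free because [nfree s] is even by parity. *)
rewrite /win_star /margin /legal_move; case: s => c p m f /=.
have := odd_double_half n; case: leaf => n_parity n_count win legal /=; last first.
  move/eqP: legal => c0 odd_n; subst c; exists true, (sig == b);
  rewrite odd_n in n_parity *.
  by split; [lia | case: sig b win => -[] /= | left]; lia.
case: (boolP ((c == None) && odd n)) => [/andP[/eqP c0 odd_n]|not_open_odd] _.
  subst c; exists false, (sig == b); rewrite odd_n in n_parity *.
  by split=> //; [case: sig b win => -[] /= | left]; lia.
exists true, (~~ b); split; last by right.
- move: win not_open_odd; case: (odd n) in n_parity *;
  by case: c => [[]|]; case: sig b => -[] //= *; lia.
- by move: win {not_open_odd}; case: c => [[]|]; case: sig b => -[] //= *; lia.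
Qed.

Lemma win_star_centre sig n s b :
  ~~ odd n -> centre s = None -> win_star sig n s -> win_star sig n (star_move false b s).
Proof.
case: s => c p m f /negbTE even_n /= ->.
by rewrite /win_star /margin /= even_n => ->; rewrite subrr mulr0.
Qed.

Lemma draw_star_reply sig n s leaf b :
  (nplus s + nminus s + nfree s)%N = n -> ~~ odd n -> draw_star sig s -> legal_move leaf s ->
  draw_star sig (star_move leaf b s) \/
  exists leaf' b', legal_move leaf' (star_move leaf b s) /\
                   draw_star sig (star_move leaf' b' (star_move leaf b s)).
Proof.
(* A leaf move is answered by the opposite leaf while another leaf is free; on the last
   leaf, parity makes the margin odd, so it was at least 1 before the move. *)
rewrite /draw_star /margin /legal_move; case: s => c p m f /=.
have := odd_double_half n; case: leaf => n_parity n_count /negbTE even_n draw legal /=.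
  rewrite even_n in n_parity; case: (ltnP 1 f) => f_gt1.
    by right; exists true, (~~ b); move: draw; case: c => [[]|]; case: sig b => -[] //= *; lia.
  by left; move: draw; case: c => [[]|]; case: sig b => -[] //= *; lia.
by left; move/eqP: legal draw => -> /= ->; rewrite subrr mulr0.
Qed.

Lemma draw_star_move sig s leaf :
  draw_star sig s -> legal_move leaf s ->
  exists leaf' b', legal_move leaf' s /\ draw_star sig (star_move leaf' b' s).
Proof.
rewrite /draw_star /margin /legal_move; case: s => [[c|] p m f] /=.
- case: leaf => // draw f_gt0; exists true, (sig == c); split=> //.
  by move: draw; case: sig c => -[] /= draw; lia.
- by move=> p_m _; exists false, true; rewrite /= p_m subrr mulr0.
Qed.

Lemma card_update (T : finType) (P Q : pred T) x0 :
  (forall x, x != x0 -> P x = Q x) -> (#|P| + Q x0 = #|Q| + P x0)%N.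
Proof.
move=> PQ; rewrite (cardD1 x0 P) (cardD1 x0 Q).
suff -> : #|[predD1 P & x0]| = #|[predD1 Q & x0]| by lia.
apply: eq_card => x; rewrite !inE; case: (eqVneq x x0) => //= x_x0.
by rewrite -!topredE /= PQ.
Qed.

Definition spin_val (o : option bool) : int :=
  match o with Some true => 1 | Some false => -1 | None => 0 end.

Section StarSummary.
Variable n : nat.
Implicit Types (f g : 'I_n.+1 -> option bool) (j : 'I_n.+1).

Definition leaves_with f (o : option bool) := #|[pred j | (j != ord0) && (f j == o)]|.

Definition summary f :=
  StarState (f ord0) (leaves_with f (Some true)) (leaves_with f (Some false))
            (leaves_with f None).

Lemma leaves_withE f o : leaves_with f o = (\sum_(j | j != ord0) (f j == o))%N.
Proof.
rewrite /leaves_with -sum1_card big_mkcond [RHS]big_mkcond /=.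
by apply: eq_bigr => j _; rewrite inE; case: (j != ord0); case: (f j == o).
Qed.

Lemma summary_count f :
  (nplus (summary f) + nminus (summary f) + nfree (summary f))%N = n.
Proof.
transitivity #|[pred j : 'I_n.+1 | j != ord0]|; last by rewrite cardC1 card_ord.
rewrite /= !leaves_withE -!big_split -sum1_card /=.
by apply: eq_bigr => j _; case: (f j) => [[]|].
Qed.

Lemma eq_summary f g : f =1 g -> summary f = summary g.
Proof.
move=> fg; rewrite /summary /leaves_with fg.
by congr StarState; apply: eq_card => j; rewrite !inE fg.
Qed.

Lemma summary_update f j b : f j = None ->
  summary (fun j' => if j' == j then Some b else f j') = star_move (j != ord0) b (summary f).
Proof.
move=> fj; have upd_ne j' : j' != j -> (if j' == j then Some b else f j') = f j'.
  by move/negbTE ->.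
case: (eqVneq j ord0) => [j0|j_leaf] /=.
  subst j; rewrite /summary /=; congr StarState; apply: eq_card => j'; rewrite !inE;
  by case: (eqVneq j' ord0) => //= /upd_ne ->.
have leavesE o :
    (leaves_with (fun j' => if j' == j then Some b else f j') o + (f j == o)
     = leaves_with f o + (Some b == o))%N.
  have := @card_update _ [pred j' | (j' != ord0) && ((if j' == j then Some b else f j') == o)]
                         [pred j' | (j' != ord0) && (f j' == o)] j.
  by rewrite /= eqxx j_leaf; apply=> j' /upd_ne ->.
rewrite /summary /= eq_sym (negbTE j_leaf) fj in leavesE *; clear upd_ne.
congr StarState.
- by move: (leavesE (Some true)); case: b {leavesE} => /=; lia.
- by move: (leavesE (Some false)); case: b {leavesE} => /=; lia.
- by move: (leavesE None) => /=; lia.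
Qed.

Lemma legal_summary f j : f j = None -> legal_move (j != ord0) (summary f).
Proof.
move=> fj; case: (eqVneq j ord0) => [j0|j_leaf] /=; first by rewrite -j0 fj.
by apply/card_gt0P; exists j; rewrite inE j_leaf fj.
Qed.

Lemma summary_legal f leaf :
  legal_move leaf (summary f) -> exists2 j, (j != ord0) = leaf & f j = None.
Proof.
case: leaf => /= [/card_gt0P[j]|/eqP f0]; last by exists ord0.
by rewrite inE => /andP[j_leaf /eqP fj]; exists j.
Qed.

Lemma summary_unassigned : summary (fun=> None) = StarState None 0 0 n.
Proof.
have no_leaf b : leaves_with (fun=> None) (Some b) = 0%N.
  by apply: eq_card0 => j; rewrite inE andbF.
move: (summary_count (fun=> None)); rewrite /summary /= !no_leaf => count.
by congr StarState; lia.
Qed.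

Lemma summary_leaf_spin f :
  \sum_(j | j != ord0) spin_val (f j) = (nplus (summary f))%:Z - (nminus (summary f))%:Z.
Proof.
rewrite /= !leaves_withE -!natz !natr_sum -sumrB; apply: eq_bigr => j _.
by case: (f j) => [[]|].
Qed.

End StarSummary.

(** * Disjoint unions of stars *)

Section DisjointStars.
Variable ns : seq nat.
Local Notation vertex := (stars_vertex ns).
Local Notation star_id := 'I_(size ns).
Local Notation position := (assignment vertex).

Definition nleaves (i : star_id) := nth 0%N ns i.

Definition vx i (j : 'I_(nleaves i).+1) : vertex :=
  Tagged (fun i : star_id => 'I_(nleaves i).+1) j.

Definition star (a : position) i := summary (fun j : 'I_(nleaves i).+1 => a (vx j)).

Lemma star_count (a : position) i :
  (nplus (star a i) + nminus (star a i) + nfree (star a i))%N = nleaves i.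
Proof. exact: summary_count. Qed.

Lemma star_unassigned i : star [ffun=> None] i = StarState None 0 0 (nleaves i).
Proof. by rewrite -summary_unassigned; apply: eq_summary => j; rewrite ffunE. Qed.

Definition star_step (a a' : position) i leaf b :=
  forall k, star a' k = if k == i then star_move leaf b (star a k) else star a k.

Lemma star_step_other (a a' : position) i leaf b :
  star_step a a' i leaf b -> forall k, k != i -> star a' k = star a k.
Proof. by move=> step k /negbTE ki; rewrite step ki. Qed.

Lemma star_assign (a : position) i (j : 'I_(nleaves i).+1) b :
  a (vx j) = None -> star_step a (assign a (vx j, b)) i (j != ord0) b.
Proof.
move=> aj k; case: (eqVneq k i) => [->|ki].
  by rewrite -summary_update //; apply: eq_summary => j'; rewrite ffunE /= eq_Tagged.
apply: eq_summary => j'; rewrite ffunE /=.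
by case: eqP => // /(congr1 tag) /= ik; rewrite ik eqxx in ki.
Qed.

Lemma moves_star_step (a : position) m : m \in moves a ->
  exists i leaf b, legal_move leaf (star a i) /\ star_step a (assign a m) i leaf b.
Proof.
case: m => [[i j] b]; rewrite mem_moves => /eqP aj.
by exists i, (j != ord0), b; split; [exact: legal_summary | exact: star_assign].
Qed.

Lemma star_step_moves (a : position) i leaf b : legal_move leaf (star a i) ->
  exists2 m, m \in moves a & star_step a (assign a m) i leaf b.
Proof.
case/summary_legal => j <- aj; exists (vx j, b); first by rewrite mem_moves aj.
exact: star_assign.
Qed.

Definition centre_vx i := vx (ord0 : 'I_(nleaves i).+1).

Definition is_leaf (v : vertex) := val (tagged v) != 0%N.

Definition leaf_edge (v : vertex) : {set vertex} := [set centre_vx (tag v); v].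

Lemma centre_vxE (v : vertex) : ~~ is_leaf v -> v = centre_vx (tag v).
Proof. by case: v => i j /negPn/eqP j0; congr Tagged; apply: val_inj. Qed.

Lemma centre_vx_not_leaf i : ~~ is_leaf (centre_vx i).
Proof. by []. Qed.

Lemma edges_stars : edges (@stars_adj ns) = [set leaf_edge v | v in is_leaf].
Proof.
apply/setP => E; rewrite inE; apply/existsP/imsetP => [[x /existsP[y]]|[v v_leaf ->]].
  rewrite /stars_adj => /andP[/andP[/eqP xy]] + /eqP ->.
  have leafE v : ~~ is_leaf v = (val (tagged v) == 0%N) by rewrite negbK.
  case x0: (val (tagged x) == 0%N); case y0: (val (tagged y) == 0%N) => //= _.
    exists y; first by rewrite -topredE /= /is_leaf y0.
    by rewrite /leaf_edge -xy -centre_vxE // leafE x0.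
  exists x; first by rewrite -topredE /= /is_leaf x0.
  by rewrite /leaf_edge setUC xy -centre_vxE // leafE y0.
exists (centre_vx (tag v)); apply/existsP; exists v.
by rewrite eqxx andbT /stars_adj /= eqxx; move: v_leaf; rewrite /is_leaf => /negbTE ->.
Qed.

Lemma score_stars (a : position) :
  score (@stars_adj ns) a =
  \sum_i spin_val (centre (star a i)) * ((nplus (star a i))%:Z - (nminus (star a i))%:Z).
Proof.
rewrite /score edges_stars big_imset /=; last first.
  move=> v w _ w_leaf /setP/(_ w); rewrite !inE eqxx orbT => /orP[/eqP wc|/eqP //].
  by move: w_leaf; rewrite wc -topredE /= (negbTE (centre_vx_not_leaf _)).
rewrite (eq_bigr (fun v => spin a (centre_vx (tag v)) * spin a v)); last first.
  move=> v v_leaf; rewrite big_setU1 ?big_set1 //= inE.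
  by apply/eqP => cv; move: v_leaf; rewrite -cv.
under [RHS]eq_bigr do rewrite -summary_leaf_spin mulr_sumr.
rewrite (sig_big_dep predT (fun i (j : 'I_(nleaves i).+1) => j != ord0)
           (fun i j => spin a (centre_vx i) * spin a (vx j))) /=.
by apply: eq_big => [[i j]|[i j]].
Qed.

Lemma sgn_score (a : position) sig :
  sgn sig * score (@stars_adj ns) a = \sum_i margin sig (star a i).
Proof.
rewrite score_stars mulr_sumr; apply: eq_bigr => i _; rewrite /margin mulrA.
by case: (centre _) => [[]|]; case: sig; rewrite /= ?mulr1 ?mulr0 ?mul0r ?mulrNN ?mulr1.
Qed.

Lemma has_star (P : pred nat) : has P ns -> exists i : star_id, P (nleaves i).
Proof.
case/hasP => x x_ns Px; have x_lt : (index x ns < size ns)%N by rewrite index_mem.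
by exists (Ordinal x_lt); rewrite /nleaves /= nth_index.
Qed.

Definition open_even (a : position) i := ~~ odd (nleaves i) && (centre (star a i) == None).

Definition nopen_even (a : position) := #|[pred i | open_even a i]|.

Lemma nopen_even_local (a a' : position) i :
  (forall k, k != i -> star a' k = star a k) ->
  (nopen_even a' + open_even a i = nopen_even a + open_even a' i)%N.
Proof. by move=> same; apply: card_update => k /same same_k; rewrite /= /open_even same_k. Qed.

Lemma nopen_even_unassigned :
  nopen_even [ffun=> None] = count (fun n => ~~ odd n) ns.
Proof.
rewrite /nopen_even -sum1_count (big_nth 0%N) big_mkord -sum1_card; apply: eq_bigl => i.
by rewrite -topredE /= /open_even star_unassigned andbT.
Qed.

Lemma odd_nopen_even (a : position) : odd (nopen_even a) -> exists i, open_even a i.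
Proof.
move=> odd_n; have /card_gt0P[i] : (0 < nopen_even a)%N by case: (nopen_even a) odd_n.
by exists i.
Qed.

Section WinningStrategy.
Variable sig : bool.

Definition win_stars (a : position) := forall i, win_star sig (nleaves i) (star a i).

Definition win_inv (a : position) := win_stars a /\ ~~ odd (nopen_even a).

Lemma win_stars_centre_move (a a' : position) i b :
  star_step a a' i false b -> open_even a i -> win_stars a ->
  win_stars a' /\ (nopen_even a').+1 = nopen_even a.
Proof.
move=> step /andP[even_i /eqP open_i] win; split.
  move=> k; rewrite step; case: eqP => [->|_]; last exact: win.
  exact: win_star_centre.
have := nopen_even_local (star_step_other step).
by rewrite /open_even step eqxx even_i open_i /=; lia.
Qed.

Lemma win_inv_reply (a : position) m :
  win_inv a -> m \in moves a -> can_maintain win_inv (assign a m).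
Proof.
move=> [win even_open] /moves_star_step[i [leaf [b [legal step]]]]; right.
have step_i : star (assign a m) i = star_move leaf b (star a i) by rewrite step eqxx.
case: (boolP (leaf || odd (nleaves i))) => [leaf_or_odd|].
  have [leaf' [b' [+ win' keep_open]]] :=
    win_star_reply b (star_count a i) (win i) legal leaf_or_odd.
  rewrite -step_i => /(star_step_moves b')[m' m'_a step']; exists m' => //; split.
    move=> k; rewrite step'; case: eqP => [->|/eqP ki]; first by rewrite step_i.
    by rewrite (star_step_other step ki).
  have same k : k != i -> star (assign (assign a m) m') k = star a k.
    by move=> ki; rewrite (star_step_other step') ?(star_step_other step).
  have := nopen_even_local same; rewrite /open_even step' eqxx step eqxx.
  by case: keep_open => [->|->] /= /addIn ->.
rewrite negb_or => /andP[/negbTE leaf0 even_i]; subst leaf.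
have [win1 open1] := win_stars_centre_move step (introT andP (conj even_i legal)) win.
have [k] : exists k, open_even (assign a m) k.
  by apply: odd_nopen_even; move: even_open; rewrite -open1 /=; case: odd.
move=> /[dup] /andP[_ legal_k] open_k.
have [m' m'_a step'] := @star_step_moves _ k false true legal_k; exists m' => //.
have [win2 open2] := win_stars_centre_move step' open_k win1.
by split=> //; move: even_open; rewrite -open1 -open2 /= negbK.
Qed.

Lemma win_inv_final (a : position) :
  has odd ns -> win_stars a -> nilp (moves a) -> 1 <= sgn sig * sgz (score (@stars_adj ns) a).
Proof.
move=> /has_star[i0 odd_i0] win /nil_moves_assigned assigned.
have margin_odd i : margin sig (star a i) = odd (nleaves i).
  move: (win i) (assigned (centre_vx i)); rewrite /win_star -[a _]/(centre (star a i)).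
  by case: (centre (star a i)).
rewrite sgn_sgz -gtz0_ge1 sgz_gt0 sgn_score (bigD1 i0) //= margin_odd odd_i0.
by rewrite ltr_pwDl // sumr_ge0 // => i _; rewrite margin_odd.
Qed.

Lemma win_stars_unassigned : win_stars [ffun=> None].
Proof. by move=> i; rewrite /win_star star_unassigned. Qed.

Lemma win_inv_unassigned :
  ~~ odd (count (fun n => ~~ odd n) ns) -> win_inv [ffun=> None].
Proof. by rewrite -nopen_even_unassigned; split=> //; apply: win_stars_unassigned. Qed.

Lemma win_first_move :
  odd (count (fun n => ~~ odd n) ns) -> can_maintain win_inv [ffun=> None].
Proof.
rewrite -nopen_even_unassigned => odd_open; right.
have [i /[dup] /andP[_ legal] open_i] := odd_nopen_even odd_open.
have [m m_a step] := @star_step_moves _ i false true legal; exists m => //.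
have [win1 open1] := win_stars_centre_move step open_i win_stars_unassigned.
by split=> //; move: odd_open; rewrite -open1.
Qed.

End WinningStrategy.

Section DrawingStrategy.
Variable sig : bool.

Definition draw_inv (a : position) := forall i, draw_star sig (star a i).

Lemma draw_inv_score (a : position) : draw_inv a -> 0 <= sgn sig * sgz (score (@stars_adj ns) a).
Proof.
move=> draw; rewrite sgn_sgz sgz_ge0 sgn_score sumr_ge0 // => i _.
by move: (draw i); rewrite /draw_star /margin; case: (centre _).
Qed.

Lemma draw_inv_maintain (a : position) : draw_inv a -> can_maintain draw_inv a.
Proof.
move=> draw; case: (boolP (nilp (moves a))) => [nil_a|cont_a]; [by left | right].
have [m m_a] : exists m, m \in moves a.
  by case: (moves a) cont_a => [//|m s] _; exists m; rewrite mem_head.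
have [i [leaf [b [legal _]]]] := moves_star_step m_a.
have [leaf' [b' [legal' draw']]] := draw_star_move (draw i) legal.
have [m' m'_a step] := star_step_moves b' legal'; exists m' => // k.
by rewrite step; case: eqP => [->|_].
Qed.

Lemma draw_inv_reply (a : position) m : all (fun n => ~~ odd n) ns ->
  draw_inv a -> m \in moves a -> can_maintain draw_inv (assign a m).
Proof.
move=> evens draw /moves_star_step[i [leaf [b [legal step]]]].
have even_i : ~~ odd (nleaves i) := allP evens _ (mem_nth 0%N (ltn_ord i)).
have step_i : star (assign a m) i = star_move leaf b (star a i) by rewrite step eqxx.
have draw_other k : k != i -> draw_star sig (star (assign a m) k).
  by move=> ki; rewrite (star_step_other step ki).
case: (draw_star_reply b (star_count a i) even_i (draw i) legal) => [draw'|].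
  by apply: draw_inv_maintain => k; case: (eqVneq k i) => [->|/draw_other]; rewrite ?step_i.
case=> [leaf' [b' []]]; rewrite -step_i => /(star_step_moves b')[m' m'_a step'] draw'.
right; exists m' => // k; rewrite step'.
by case: (eqVneq k i) => [->|/draw_other].
Qed.

End DrawingStrategy.

Lemma stars_player2_wins :
  has odd ns -> ~~ odd (count (fun n => ~~ odd n) ns) -> player2_wins (@stars_adj ns).
Proof.
move=> has_odd even_count p; rewrite (_ : (if p then -1 else 1) = sgn (~~ p)); last by case: p.
apply: game_value_winner; rewrite -[p in game_value _ p]negbK.
apply: (@game_value_second_ge _ _ _ _ (win_inv (~~ p))) => //.
- by move=> a [win _]; apply: win_inv_final.
- exact: win_inv_reply.
- exact: win_inv_unassigned.
Qed.

Lemma stars_player1_wins :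
  has odd ns -> odd (count (fun n => ~~ odd n) ns) -> player1_wins (@stars_adj ns).
Proof.
move=> has_odd odd_count p; rewrite (_ : (if p then 1 else -1) = sgn p); last by case: p.
apply: game_value_winner; apply: (@game_value_first_ge _ _ _ _ (win_inv p)) => //.
- by move=> a [win _]; apply: win_inv_final.
- exact: win_inv_reply.
- exact: win_first_move.
Qed.

Lemma stars_draw : all (fun n => ~~ odd n) ns -> sign_game_draw (@stars_adj ns).
Proof.
move=> evens p.
have first : 0 <= sgn p * game_value (@stars_adj ns) p.
  apply: (@game_value_first_ge _ _ _ _ (draw_inv p)) => //.
  - by move=> a + _; apply: draw_inv_score.
  - by move=> a m; apply: draw_inv_reply.
  - by apply: draw_inv_maintain => i; rewrite /draw_star star_unassigned.
have second : 0 <= sgn (~~ p) * game_value (@stars_adj ns) (~~ ~~ p).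
  apply: (@game_value_second_ge _ _ _ _ (draw_inv (~~ p))) => //.
  - by move=> a + _; apply: draw_inv_score.
  - by move=> a m; apply: draw_inv_reply.
  - by move=> i; rewrite /draw_star star_unassigned.
by move: first second; rewrite negbK; case: p => /=; lia.
Qed.

End DisjointStars.

Theorem theorem3 (ns : seq nat) :
  ns != [::] -> all (fun n => 0 < n)%N ns ->
  [/\ (all (fun n => ~~ odd n) ns -> sign_game_draw (@stars_adj ns)),
      (has odd ns -> ~~ odd (count (fun n => ~~ odd n) ns) ->
         player2_wins (@stars_adj ns))
    & (has odd ns -> odd (count (fun n => ~~ odd n) ns) ->
         player1_wins (@stars_adj ns))].
Proof.
move=> _ _; split; [exact: stars_draw | exact: stars_player2_wins | exact: stars_player1_wins].
Qed.
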